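(* Let $3\le n,q<\omega$, $0\le m\le n$ and $0\le p\le q$. Then $L_6(p,q)\in\mathbf{V}(L_6(m,n))$ if and only if $p\le m$ and either (a) $p=q=m=n$, or (b) $p<q$ and $q\le p+\lfloor (m-p)/2\rfloor+n-m$.
   Context: For a finite set $S$ with $|S|\ge3$ and $I\subseteq S$, $Q_6(I,S)$ is the finite $pm$-space on $S\cup\zeta(S)$, where $\zeta(S)$ is a disjoint copy of $S$, $\zeta$ interchanges each $s\in S$ with its copy $\zeta(s)$, the topology is discrete, and the only strict comparabilities are: for $x,y\in S$, $x<\zeta(y)$ iff ($x\ne y$ or $x\notin I$). $Q_6(m,n)$ denotes $Q_6(I,S)$ with $|S|=n$, $|I|=m$ (unique up to isomorphism). $L_6(m,n)$ is its dual pseudocomplemented de Morgan algebra: the clopen (here: all) decreasing subsets $X$ of $Q_6(m,n)$ with $\cap,\cup,\emptyset$, the whole set, $X^\ast=$ complement of the up-set $[X)$, and $X'=$ complement of $\zeta(X)$. $\mathbf{V}(A)$ denotes the variety generated by $A$. *)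

From mathcomp Require Import all_boot.
Set Implicit Arguments. Unset Strict Implicit. Unset Printing Implicit Defensive.

Record pdmSig := PdmSig {
  car :> Type;
  pjoin : car -> car -> car;
  pmeet : car -> car -> car;
  pstar : car -> car;
  pneg  : car -> car;
  pbot  : car;
  ptop  : car }.

(* B belongs to V(A) = HSP(A): B is a homomorphic image of a subalgebra of a
   (possibly infinite) direct power A^I. *)
Definition inV (B A : pdmSig) : Prop :=
  exists (I : Type) (S : (I -> A) -> Prop),
    (forall x y, S x -> S y -> S (fun i => pjoin (x i) (y i))) /\
    (forall x y, S x -> S y -> S (fun i => pmeet (x i) (y i))) /\
    (forall x, S x -> S (fun i => pstar (x i))) /\
    (forall x, S x -> S (fun i => pneg (x i))) /\
    S (fun _ => pbot A) /\ S (fun _ => ptop A) /\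
    exists h : (I -> A) -> B,
      (forall x y, S x -> S y -> h (fun i => pjoin (x i) (y i)) = pjoin (h x) (h y)) /\
      (forall x y, S x -> S y -> h (fun i => pmeet (x i) (y i)) = pmeet (h x) (h y)) /\
      (forall x, S x -> h (fun i => pstar (x i)) = pstar (h x)) /\
      (forall x, S x -> h (fun i => pneg (x i)) = pneg (h x)) /\
      h (fun _ => pbot A) = pbot B /\ h (fun _ => ptop A) = ptop B /\
      (forall b : B, exists x, S x /\ h x = b).

(* S = 'I_n, I = {i | i < m}; the point (false, i) is s_i and (true, i) is zeta(s_i). *)
Section Q6.
Variables m n : nat.
Definition Q6 := (bool * 'I_n)%type.

Definition zeta (x : Q6) : Q6 := (~~ x.1, x.2).

Definition q6le (x y : Q6) : bool :=
  (x == y) || [&& ~~ x.1, y.1 & (x.2 != y.2) || (m <= x.2)].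

Definition decreasing (X : {set Q6}) : bool :=
  [forall x, forall y, ((y \in X) && q6le x y) ==> (x \in X)].

Lemma q6le_trans x y z : q6le x y -> q6le y z -> q6le x z.
Proof.
rewrite /q6le; case/orP=> [/eqP -> //|H].
case/orP=> [/eqP <-|/and3P [ny1 _ _]]; first by rewrite H orbT.
by case/and3P: H => _ y1 _; rewrite y1 in ny1.
Qed.

Lemma q6le_zeta x y : q6le x y -> q6le (zeta y) (zeta x).
Proof.
case: x y => [a i] [b j]; rewrite /q6le /zeta /= !xpair_eqE.
case/orP=> [/andP [/eqP -> /eqP ->]|]; first by rewrite !eqxx.
case: a; case: b => //= H.
case/orP: H => [ne|le]; first by rewrite eq_sym ne.
case: (eqVneq j i) => [->|]; by rewrite ?le ?orbT.
Qed.

Record L6T := L6E { lset :> {set Q6}; lsetP : decreasing lset }.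

Lemma decreasingP (X : {set Q6}) :
  reflect (forall x y, y \in X -> q6le x y -> x \in X) (decreasing X).
Proof.
apply: (iffP forallP) => [H x y yX le| H x]; first by move: (forallP (H x) y); rewrite yX le.
by apply/forallP => y; apply/implyP => /andP [yX le]; exact: H yX le.
Qed.

Definition upset (X : {set Q6}) : {set Q6} := [set y | [exists x in X, q6le x y]].

Lemma dec_join (X Y : L6T) : decreasing (lset X :|: lset Y).
Proof.
apply/decreasingP => x y; rewrite !inE => /orP [] H le; apply/orP;
  [left; exact: (decreasingP _ (lsetP X)) H le|right; exact: (decreasingP _ (lsetP Y)) H le].
Qed.

Lemma dec_meet (X Y : L6T) : decreasing (lset X :&: lset Y).
Proof.
apply/decreasingP => x y; rewrite !inE => /andP [H1 H2] le; apply/andP; split;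
  [exact: (decreasingP _ (lsetP X)) H1 le|exact: (decreasingP _ (lsetP Y)) H2 le].
Qed.

Lemma dec_star (X : L6T) : decreasing (~: upset (lset X)).
Proof.
apply/decreasingP => x y; rewrite !inE => Hy le; apply/negP => /existsP [z /andP [zX zx]].
by move/negP: Hy; apply; apply/existsP; exists z; rewrite zX (q6le_trans zx le).
Qed.

Lemma dec_neg (X : L6T) : decreasing [set y | zeta y \notin lset X].
Proof.
apply/decreasingP => x y; rewrite !inE => Hy le; apply/negP => Hx.
by move/negP: Hy; apply; exact: (decreasingP _ (lsetP X)) Hx (q6le_zeta le).
Qed.

Lemma dec_bot : decreasing set0.
Proof. by apply/decreasingP => x y; rewrite inE. Qed.

Lemma dec_top : decreasing setT.
Proof. by apply/decreasingP => x y; rewrite !inE. Qed.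

(* L_6(m,n): all (clopen = all, discrete topology) decreasing subsets of Q_6(m,n), with
   union, intersection, X* = complement of [X), X' = complement of zeta(X), empty set, whole set. *)
Definition L6 : pdmSig :=
  @PdmSig L6T
    (fun X Y => L6E (dec_join X Y))
    (fun X Y => L6E (dec_meet X Y))
    (fun X => L6E (dec_star X))
    (fun X => L6E (dec_neg X))
    (L6E dec_bot)
    (L6E dec_top).
End Q6.

(* For n >= 3 the algebra L_6(m,n) has a discriminator term: with a(X,Y) = (X /\ Y* )*
   and e(X,Y) = X \/ (Y'* )', the meet of a(X,Y), a(Y,X), e(X,Y), e(Y,X) is the top exactly
   when X = Y (Q_6 has height one), and three iterations of X |-> X'* send every other
   element to the bottom.  So the finite algebra L_6(p,q) lies in V(L_6(m,n)) iff it embeds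
   into L_6(m,n).  By duality, embeddings correspond to surjective monotone maps
   Q_6(m,n) -> Q_6(p,q) which satisfy the back condition and commute with zeta; for n >= 3
   such a map preserves levels, so it comes from a surjection g : S -> S' whose fibres over
   I' are single points of I, and whose other fibres contain a point outside I or two points.
   Counting points of S with weight 1 in I and 2 outside I gives the bounds; pairing up the
   points of I \ I' gives the construction. *)

From HB Require Import structures.
From mathcomp Require Import all_boot zify.
From Stdlib Require Import ClassicalEpsilon FunctionalExtensionality Classical.
From Stdlib Require List.
Set Implicit Arguments. Unset Strict Implicit. Unset Printing Implicit Defensive.

(** * Varieties and discriminator terms *)

Definition pow_alg (I : Type) (A : pdmSig) : pdmSig :=
  @PdmSig (I -> A)
    (fun x y i => pjoin (x i) (y i))
    (fun x y i => pmeet (x i) (y i))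
    (fun x i => pstar (x i))
    (fun x i => pneg (x i))
    (fun _ => pbot A) (fun _ => ptop A).

Record subalgebra (A : pdmSig) (S : A -> Prop) : Prop := Subalgebra {
  subJ : forall x y, S x -> S y -> S (pjoin x y);
  subM : forall x y, S x -> S y -> S (pmeet x y);
  subS : forall x, S x -> S (pstar x);
  subN : forall x, S x -> S (pneg x);
  sub0 : S (pbot A);
  sub1 : S (ptop A) }.

Record hom_on (A B : pdmSig) (S : A -> Prop) (h : A -> B) : Prop := HomOn {
  homJ : forall x y, S x -> S y -> h (pjoin x y) = pjoin (h x) (h y);
  homM : forall x y, S x -> S y -> h (pmeet x y) = pmeet (h x) (h y);
  homS : forall x, S x -> h (pstar x) = pstar (h x);
  homN : forall x, S x -> h (pneg x) = pneg (h x);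
  hom0 : h (pbot A) = pbot B;
  hom1 : h (ptop A) = ptop B }.

Notation hom := (hom_on (fun _ => True)).

Lemma inVP (B A : pdmSig) :
  inV B A <-> exists I (S : pow_alg I A -> Prop) (h : pow_alg I A -> B),
    [/\ subalgebra S, hom_on S h & forall b, exists x, S x /\ h x = b].
Proof.
split.
  move=> [I [S [SJ [SM [SS [SN [S0 [S1 [h [hJ [hM [hS [hN [h0 [h1 hs]]]]]]]]]]]]]]].
  by exists I, S, h; split.
move=> [I [S [h [[SJ SM SS SN S0 S1] [hJ hM hS hN h0 h1] hs]]]].
by exists I, S; do 6 (split => //); exists h.
Qed.

Inductive term2 : Type :=
  | tX | tY
  | tJoin of term2 & term2 | tMeet of term2 & term2
  | tStar of term2 | tNeg of term2
  | tBot | tTop.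

Fixpoint teval (A : pdmSig) (x y : A) (t : term2) : A :=
  match t with
  | tX => x | tY => y
  | tJoin t u => pjoin (teval x y t) (teval x y u)
  | tMeet t u => pmeet (teval x y t) (teval x y u)
  | tStar t => pstar (teval x y t)
  | tNeg t => pneg (teval x y t)
  | tBot => pbot A | tTop => ptop A
  end.

Lemma teval_pow I A (x y : pow_alg I A) t i : teval x y t i = teval (x i) (y i) t.
Proof. by elim: t => //= [t IHt u IHu|t IHt u IHu|t IHt|t IHt]; rewrite ?IHt ?IHu. Qed.

Section TermClosure.
Variables (A B : pdmSig) (S : A -> Prop) (h : A -> B).
Hypotheses (Ssub : subalgebra S) (hhom : hom_on S h).

Lemma subalgebra_teval x y t : S x -> S y -> S (teval x y t).
Proof.
move=> Sx Sy; case: Ssub => SJ SM SS SN S0 S1.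
by elim: t => /=; auto.
Qed.

Lemma hom_on_teval x y t : S x -> S y -> h (teval x y t) = teval (h x) (h y) t.
Proof.
move=> Sx Sy; case: hhom => hJ hM hS hN h0 h1.
elim: t => //= [t IHt u IHu|t IHt u IHu|t IHt|t IHt];
  rewrite -?IHt -?IHu; auto using subalgebra_teval.
Qed.

End TermClosure.

Lemma hom_foldr_join (A B : pdmSig) (phi : B -> A) (s : seq B) : hom phi ->
  phi (foldr (@pjoin B) (pbot B) s) = foldr (@pjoin A) (pbot A) (map phi s).
Proof. by move=> hphi; elim: s => [|b s IH] /=; rewrite ?(hom0 hphi) // (homJ hphi) ?IH. Qed.

Definition discriminator (A : pdmSig) (d : term2) :=
  (forall x : A, teval x x d = ptop A) /\ (forall x y : A, x <> y -> teval x y d = pbot A).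

Section Discriminator.
Variables (A B : pdmSig) (d : term2).
Hypotheses (discrA : discriminator A d) (discrB : discriminator B d).
Hypotheses (A_nontrivial : ptop A <> pbot A) (B_nontrivial : ptop B <> pbot B).
Hypotheses (meetA_top : pmeet (ptop A) (ptop A) = ptop A)
           (meetA_botl : forall x : A, pmeet (pbot A) x = pbot A)
           (meetA_botr : forall x : A, pmeet x (pbot A) = pbot A)
           (meetB_top : pmeet (ptop B) (ptop B) = ptop B).

Section Agreement.
Variables (J : Type) (S : pow_alg J A -> Prop) (h : pow_alg J A -> B).
Hypotheses (Ssub : subalgebra S) (hhom : hom_on S h).

(* The meet of the coordinatewise discriminators [d(u, v)] is a 0/1-vector in S mapped
   to top by h; it cannot vanish everywhere since h maps the zero vector to bottom. *)
Lemma agreement_coordinate (ps : list (pow_alg J A * pow_alg J A)) :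
  (forall u v, List.In (u, v) ps -> [/\ S u, S v & h u = h v]) ->
  exists i, forall u v, List.In (u, v) ps -> u i = v i.
Proof.
move=> Hps.
have [M [SM hM HM]] : exists M, [/\ S M, h M = ptop B & forall i, M i = pbot A \/
    M i = ptop A /\ forall u v, List.In (u, v) ps -> u i = v i].
  elim: ps Hps => [|[u v] ps IH] Hps.
    exists (ptop (pow_alg J A)); split=> [||i]; [exact: (sub1 Ssub)|exact: (hom1 hhom)|by right].
  have [M [SM hM HM]] := IH (fun u' v' H => Hps u' v' (or_intror H)).
  have [Su Sv huv] := Hps u v (or_introl erefl).
  have Sd := subalgebra_teval Ssub d Su Sv.
  exists (pmeet (teval u v d) M); split; first exact: subM.
    by rewrite (homM hhom Sd SM) (hom_on_teval Ssub hhom) // huv discrB.1 hM.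
  move=> i /=; rewrite teval_pow.
  case: (classic (u i = v i)) => [uv|/discrA.2 ->]; last by left.
  rewrite uv discrA.1; case: (HM i) => [->|[-> agree]]; first by left.
  by right; split=> // u' v' [[<- <-]|/agree].
apply: NNPP => none.
have M0 : M = pbot (pow_alg J A).
  apply: functional_extensionality => i.
  by case: (HM i) => // -[_ agree]; case: none; exists i.
by apply: B_nontrivial; rewrite -hM M0 (hom0 hhom).
Qed.

End Agreement.

Hypothesis B_finite : exists s : list B, forall b, List.In b s.

Lemma discriminator_embedding : inV B A -> exists phi : B -> A, injective phi /\ hom phi.
Proof.
move/inVP => [J [S [h [Ssub hhom hsurj]]]].
have [xs xsP] : exists xs : B -> pow_alg J A, forall b, S (xs b) /\ h (xs b) = b.
  exact: choice hsurj.
have Sx b := (xsP b).1; have hx b := (xsP b).2.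
pose ops b c : list (pow_alg J A * pow_alg J A) :=
  [:: (pjoin (xs b) (xs c), xs (pjoin b c)); (pmeet (xs b) (xs c), xs (pmeet b c));
      (pstar (xs b), xs (pstar b)); (pneg (xs b), xs (pneg b));
      (teval (xs b) (xs c) d, xs (teval b c d))].
have [s sP] := B_finite.
pose ps := (xs (pbot B), pbot (pow_alg J A)) :: (xs (ptop B), ptop (pow_alg J A)) ::
  List.flat_map (fun b => List.flat_map (ops b) s) s.
have [|i agree] := @agreement_coordinate J S h Ssub hhom ps.
  move=> u v [[<- <-]|[[<- <-]|]].
  - by split; [exact: Sx|exact: (sub0 Ssub)|rewrite hx (hom0 hhom)].
  - by split; [exact: Sx|exact: (sub1 Ssub)|rewrite hx (hom1 hhom)].
  case/List.in_flat_map => b [_ /List.in_flat_map [c [_]]].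
  case=> [[<- <-]|[[<- <-]|[[<- <-]|[[<- <-]|[[<- <-]|[]]]]]].
  - by split; [exact: (subJ Ssub)|exact: Sx|rewrite (homJ hhom) ?hx].
  - by split; [exact: (subM Ssub)|exact: Sx|rewrite (homM hhom) ?hx].
  - by split; [exact: (subS Ssub)|exact: Sx|rewrite (homS hhom) ?hx].
  - by split; [exact: (subN Ssub)|exact: Sx|rewrite (homN hhom) ?hx].
  - by split; [exact: subalgebra_teval|exact: Sx|rewrite (hom_on_teval Ssub hhom) ?hx].
have agree_ops b c u v : List.In (u, v) (ops b c) -> u i = v i.
  move=> uv; apply: agree; do 2 right; apply/List.in_flat_map; exists b; split => //.
  by apply/List.in_flat_map; exists c.
have x0 : xs (pbot B) i = pbot A by apply: (agree _ _ (or_introl erefl)).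
exists (fun b => xs b i); split.
  move=> b c /= bc; apply: NNPP => /discrB.2 dbc.
  have := @agree_ops b c (teval (xs b) (xs c) d) (xs (teval b c d)) ltac:(simpl; tauto).
  by rewrite teval_pow bc discrA.1 dbc x0.
split=> [b c _ _|b c _ _|b _|b _||]; apply: esym.
- exact: (@agree_ops b c (pjoin (xs b) (xs c))) ltac:(simpl; tauto).
- exact: (@agree_ops b c (pmeet (xs b) (xs c))) ltac:(simpl; tauto).
- exact: (@agree_ops b b (pstar (xs b))) ltac:(simpl; tauto).
- exact: (@agree_ops b b (pneg (xs b))) ltac:(simpl; tauto).
- exact: esym x0.
- exact: esym (agree _ _ (or_intror (or_introl erefl))).
Qed.

End Discriminator.

Lemma embedding_inV (A B : pdmSig) (phi : B -> A) : injective phi -> hom phi -> inV B A.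
Proof.
move=> phi_inj [pJ pM pS pN p0 p1]; apply/inVP.
pose h (x : pow_alg unit A) := epsilon (inhabits (pbot B)) (fun b => phi b = x tt).
have hphi b : h (fun _ => phi b) = b.
  by apply: phi_inj; apply: (epsilon_spec _ (fun c => phi c = phi b)); exists b.
exists unit, (fun x => exists b, x = fun _ => phi b), h; split.
- split=> [_ _ [b ->] [c ->]|_ _ [b ->] [c ->]|_ [b ->]|_ [b ->]||].
  + by exists (pjoin b c); rewrite pJ.
  + by exists (pmeet b c); rewrite pM.
  + by exists (pstar b); rewrite pS.
  + by exists (pneg b); rewrite pN.
  + by exists (pbot B); rewrite p0.
  + by exists (ptop B); rewrite p1.
- split=> [_ _ [b ->] [c ->]|_ _ [b ->] [c ->]|_ [b ->]|_ [b ->]||].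
  + by rewrite -[pjoin _ _]/(fun _ => pjoin (phi b) (phi c)) -pJ // !hphi.
  + by rewrite -[pmeet _ _]/(fun _ => pmeet (phi b) (phi c)) -pM // !hphi.
  + by rewrite -[pstar _]/(fun _ => pstar (phi b)) -pS // !hphi.
  + by rewrite -[pneg _]/(fun _ => pneg (phi b)) -pN // !hphi.
  + by rewrite -[pbot _]/(fun _ => pbot A) -p0 hphi.
  + by rewrite -[ptop _]/(fun _ => ptop A) -p1 hphi.
- by move=> b; exists (fun _ => phi b); split; [exists b|exact: hphi].
Qed.

(** * The algebras L_6(m,n) *)

Section L6Basics.
Variables m n : nat.
HB.instance Definition _ := [isSub for @lset m n].
HB.instance Definition _ := [Equality of L6T m n by <:].
HB.instance Definition _ := [Choice of L6T m n by <:].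
HB.instance Definition _ := [Countable of L6T m n by <:].
HB.instance Definition _ := [Finite of L6T m n by <:].

Implicit Types (x y z : Q6 n) (X Y : L6T m n).

Lemma lset_inj : injective (@lset m n).
Proof. exact: val_inj. Qed.

Lemma q6leE (b c : bool) (i j : 'I_n) :
  q6le m (b, i) (c, j) = ((b == c) && (i == j)) || [&& ~~ b, c & (i != j) || (m <= i)].
Proof. by rewrite /q6le xpair_eqE. Qed.

Lemma q6le_refl x : q6le m x x.
Proof. by rewrite /q6le eqxx. Qed.

Lemma q6le_bot x (i : 'I_n) : q6le m x (false, i) -> x = (false, i).
Proof. by case: x => [[] j]; rewrite q6leE /= ?andbF ?orbF // => /eqP ->. Qed.

Lemma q6le_top x (i : 'I_n) : q6le m (true, i) x -> x = (true, i).
Proof. by case: x => [[] j]; rewrite q6leE /= ?andbF ?orbF // => /eqP ->. Qed.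

Lemma q6le_anti x y : q6le m x y -> q6le m y x -> x = y.
Proof. by case: x y => [[] i] [[] j]; rewrite !q6leE /= ?andbF ?orbF ?andbT // => /eqP ->. Qed.

Lemma q6le_no_chain x y z : q6le m x y -> q6le m y z -> x != y -> y != z -> False.
Proof.
rewrite /q6le => /orP [/eqP -> |/and3P [_ y1 _]]; first by rewrite eqxx.
by case/orP => [/eqP -> | /and3P [ny1 _ _]]; [rewrite eqxx | rewrite y1 in ny1].
Qed.

Lemma zetaK : involutive (@zeta n).
Proof. by case=> b i; rewrite /zeta /= negbK. Qed.

Lemma q6le_zetaE x y : q6le m (zeta x) (zeta y) = q6le m y x.
Proof. by apply/idP/idP => [/q6le_zeta|/q6le_zeta //]; rewrite !zetaK. Qed.

Lemma L6_decreasing X x y : y \in lset X -> q6le m x y -> x \in lset X.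
Proof. by move: (lsetP X) => /decreasingP; apply. Qed.

Lemma in_join X Y x : (x \in lset (@pjoin (L6 m n) X Y)) = (x \in lset X) || (x \in lset Y).
Proof. by rewrite inE. Qed.

Lemma in_meet X Y x : (x \in lset (@pmeet (L6 m n) X Y)) = (x \in lset X) && (x \in lset Y).
Proof. by rewrite inE. Qed.

Lemma in_star X x :
  (x \in lset (@pstar (L6 m n) X)) = ~~ [exists y in lset X, q6le m y x].
Proof. by rewrite !inE. Qed.

Lemma in_neg X x : (x \in lset (@pneg (L6 m n) X)) = (zeta x \notin lset X).
Proof. by rewrite inE. Qed.

Lemma in_bot x : (x \in lset (@pbot (L6 m n))) = false.
Proof. by rewrite inE. Qed.

Lemma in_top x : (x \in lset (@ptop (L6 m n))) = true.
Proof. by rewrite inE. Qed.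

Lemma L6_meet_top : @pmeet (L6 m n) (ptop _) (ptop _) = ptop _.
Proof. by apply: lset_inj; apply/setP => x; rewrite in_meet in_top. Qed.

Lemma L6_meet_botl X : @pmeet (L6 m n) (pbot _) X = pbot _.
Proof. by apply: lset_inj; apply/setP => x; rewrite in_meet in_bot. Qed.

Lemma L6_meet_botr X : @pmeet (L6 m n) X (pbot _) = pbot _.
Proof. by apply: lset_inj; apply/setP => x; rewrite in_meet in_bot andbF. Qed.

Lemma L6_nontrivial : 0 < n -> ptop (L6 m n) <> pbot (L6 m n).
Proof.
move=> n0 /(congr1 (fun X => (false, Ordinal n0) \in lset X)).
by rewrite in_top in_bot.
Qed.

End L6Basics.

(* In L_6(m,n), [tabove X Y] is the top iff every point of X lies above a point of Y,
   and [tbelow X Y] is the top iff every point outside X lies below a point outside Y. *)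
Definition tdstar (t : term2) : term2 := tStar (tNeg t).
Definition tabove (t u : term2) : term2 := tStar (tMeet t (tStar u)).
Definition tbelow (t u : term2) : term2 := tJoin t (tNeg (tdstar u)).
Definition disc_term : term2 :=
  tdstar (tdstar (tdstar
    (tMeet (tMeet (tabove tX tY) (tabove tY tX)) (tMeet (tbelow tX tY) (tbelow tY tX))))).

Section L6Discriminator.
Variables m n : nat.
Hypothesis n3 : 3 <= n.
Local Notation L := (L6 m n).
Local Notation dstar X := (@pstar L (@pneg L X)).
Implicit Types X Y : L6T m n.

Lemma two_others (i : 'I_n) : exists j k : 'I_n, [/\ j != i, k != i & j != k].
Proof.
have [n0 n1 n2] : [/\ 0 < n, 1 < n & 2 < n] by split; lia.
pose a := Ordinal n0; pose b := Ordinal n1; pose c := Ordinal n2.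
have [->|ia] := eqVneq i a; first by exists b, c; split; apply/eqP; case.
have [->|ib] := eqVneq i b; first by exists a, c; split; apply/eqP; case.
by exists a, b; split; rewrite 1?eq_sym //; apply/eqP; case.
Qed.

Lemma in_dstar X y :
  (y \in lset (dstar X)) = ~~ [exists z, (zeta z \notin lset X) && q6le m z y].
Proof.
rewrite in_star; congr (~~ _); apply/existsP/existsP => -[z].
  by rewrite in_neg => /andP [H1 H2]; exists z; rewrite H1.
by move=> /andP [H1 H2]; exists z; rewrite in_neg H1.
Qed.

Lemma dstar_top : dstar (ptop L) = ptop L.
Proof.
apply: lset_inj; apply/setP => y; rewrite in_dstar in_top.
by apply/existsP => -[z]; rewrite in_top.
Qed.

Lemma dstar_tops_unique X : X <> ptop L ->
  forall i k, (true, i) \in lset (dstar X) -> (true, k) \in lset (dstar X) -> i = k.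
Proof.
move=> XT i k; rewrite !in_dstar => /existsPn Hi /existsPn Hk; apply/eqP.
apply: contraNT (introN eqP XT) => ik; apply/eqP/lset_inj.
have tops l : (true, l) \in lset X.
  have [->|li] := eqVneq l i.
    by move: (Hk (false, i)); rewrite /zeta q6leE /= ik andbT negbK.
  by move: (Hi (false, l)); rewrite /zeta q6leE /= li andbT negbK.
apply/setP => -[[] l]; rewrite in_top ?tops //.
have [->|li] := eqVneq l i; last by apply: L6_decreasing (tops i) _; rewrite q6leE /= li.
by apply: L6_decreasing (tops k) _; rewrite q6leE /= ik.
Qed.

Lemma dstar_no_top X :
  (forall i k, (true, i) \in lset X -> (true, k) \in lset X -> i = k) ->
  forall i, (true, i) \notin lset (dstar X).
Proof.
move=> uniq i; rewrite in_dstar negbK.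
have [j [k [ji ki jk]]] := two_others i.
apply/existsP; case: (boolP ((true, j) \in lset X)) => Hj.
  case: (boolP ((true, k) \in lset X)) => Hk; first by rewrite (uniq _ _ Hj Hk) eqxx in jk.
  by exists (false, k); rewrite /zeta /= Hk q6leE /= ki.
by exists (false, j); rewrite /zeta /= Hj q6leE /= ji.
Qed.

Lemma dstar_bot X : (forall i, (true, i) \notin lset X) -> dstar X = pbot L.
Proof.
move=> notop; apply: lset_inj; apply/setP => -[b i]; rewrite in_dstar in_bot negbK.
apply/existsP; case: b.
  have [j [_ [ji _ _]]] := two_others i.
  by exists (false, j); rewrite /zeta /= notop q6leE /= ji.
by exists (false, i); rewrite /zeta /= notop q6le_refl.
Qed.

Lemma dstar3_proper X : X <> ptop L -> dstar (dstar (dstar X)) = pbot L.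
Proof. by move=> XT; apply/dstar_bot/dstar_no_top/dstar_tops_unique. Qed.

Lemma star_eq_top X : @pstar L X = ptop L -> X = pbot L.
Proof.
move=> E; apply: lset_inj; apply/setP => x; rewrite in_bot; apply/negP => Hx.
have : x \in lset (@pstar L X) by rewrite E in_top.
by rewrite in_star => /existsP; apply; exists x; rewrite Hx q6le_refl.
Qed.

Lemma meet_eq_top X Y : @pmeet L X Y = ptop L -> X = ptop L /\ Y = ptop L.
Proof.
move=> E; split; apply: lset_inj; apply/setP => x; rewrite in_top;
  by have := in_meet X Y x; rewrite E in_top => /esym /andP [].
Qed.

Lemma above_refl X : @pstar L (@pmeet L X (@pstar L X)) = ptop L.
Proof.
apply: lset_inj; apply/setP => x; rewrite in_star in_top; apply/existsP => -[y].
by rewrite in_meet in_star => /andP [/andP [yX /existsP []]]; exists y; rewrite yX q6le_refl.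
Qed.

Lemma above_top X Y : @pstar L (@pmeet L X (@pstar L Y)) = ptop L ->
  forall z, z \in lset X -> exists2 w, w \in lset Y & q6le m w z.
Proof.
move/star_eq_top => E z zX.
have : z \notin lset (@pmeet L X (@pstar L Y)) by rewrite E in_bot.
by rewrite in_meet zX in_star negbK => /existsP [w /andP [wY wz]]; exists w.
Qed.

Lemma in_below X Y z : (z \in lset (@pjoin L X (pneg (dstar Y)))) =
  (z \in lset X) || [exists w, (zeta w \notin lset Y) && q6le m w (zeta z)].
Proof. by rewrite in_join in_neg in_dstar negbK. Qed.

Lemma below_refl X : @pjoin L X (pneg (dstar X)) = ptop L.
Proof.
apply: lset_inj; apply/setP => z; rewrite in_below in_top.
case: (boolP (z \in lset X)) => //= zX.
by apply/existsP; exists (zeta z); rewrite zetaK zX q6le_refl.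
Qed.

Lemma below_top X Y : @pjoin L X (pneg (dstar Y)) = ptop L ->
  forall z, z \notin lset X -> exists2 v, v \notin lset Y & q6le m z v.
Proof.
move=> E z zX; have : z \in lset (@pjoin L X (pneg (dstar Y))) by rewrite E in_top.
rewrite in_below (negbTE zX) => /existsP [w /andP [wY wz]].
by exists (zeta w); rewrite // -q6le_zetaE zetaK.
Qed.

(* A point of X outside Y would lie strictly between a point of Y and a point outside X,
   but Q_6 has height one. *)
Lemma above_below_subset X Y :
  @pstar L (@pmeet L X (@pstar L Y)) = ptop L -> @pjoin L Y (pneg (dstar X)) = ptop L ->
  lset X \subset lset Y.
Proof.
move=> XY YX; apply/subsetP => z zX; apply/negPn/negP => zY.
have [w wY wz] := above_top XY zX; have [v vX zv] := below_top YX zY.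
apply: (q6le_no_chain wz zv); first by apply: contraTneq wY => ->.
by apply: contraNneq vX => <-.
Qed.

Lemma L6_discriminator : discriminator L disc_term.
Proof.
split=> [X|X Y XY]; cbn [teval disc_term tdstar tabove tbelow].
  by rewrite above_refl below_refl !L6_meet_top !dstar_top.
apply: dstar3_proper => /meet_eq_top [/meet_eq_top [aXY aYX] /meet_eq_top [bXY bYX]].
by apply/XY/lset_inj/eqP; rewrite eqEsubset !above_below_subset.
Qed.

End L6Discriminator.

(** * Duality between embeddings and maps of pm-spaces *)

Section Down.
Variables m n : nat.
Implicit Types (x y : Q6 n) (X : L6T m n).

Lemma dec_down y : decreasing m [set x | q6le m x y].
Proof. by apply/decreasingP => x z; rewrite !inE => zy /q6le_trans; apply. Qed.

Definition down y : L6T m n := L6E (dec_down y).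

Lemma in_down x y : (x \in lset (down y)) = q6le m x y.
Proof. by rewrite inE. Qed.

Lemma in_foldr_join (s : seq (L6T m n)) x :
  (x \in lset (foldr (@pjoin (L6 m n)) (pbot _) s)) = has (fun X => x \in lset X) s.
Proof. by elim: s => [|X s IH] /=; rewrite ?in_bot // in_join IH. Qed.

Lemma dec_sdown y : decreasing m [set x | q6le m x y && (x != y)].
Proof.
apply/decreasingP => x z; rewrite !inE => /andP [zy zny] xz.
rewrite (q6le_trans xz zy); apply: contraNneq zny => xy.
by apply/eqP/(q6le_anti zy); rewrite -xy.
Qed.

Definition sdown y : L6T m n := L6E (dec_sdown y).

Lemma in_sdown x y : (x \in lset (sdown y)) = q6le m x y && (x != y).
Proof. by rewrite inE. Qed.

Lemma L6_down_cover X : X = foldr (@pjoin (L6 m n)) (pbot _) [seq down y | y <- enum (lset X)].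
Proof.
apply: lset_inj; apply/setP => x; rewrite in_foldr_join has_map.
apply/idP/hasP => [xX|[y]]; first by exists x; rewrite ?mem_enum //= in_down q6le_refl.
by rewrite mem_enum /= in_down; apply: L6_decreasing.
Qed.

End Down.

Definition pm_morphism (m n p q : nat) (f : Q6 n -> Q6 q) : Prop :=
  [/\ forall x y, q6le m x y -> q6le p (f x) (f y),
      forall x y, q6le p y (f x) -> exists2 z, q6le m z x & f z = y
    & forall x, f (zeta x) = zeta (f x)].

Section EmbeddingDual.
Variables m n p q : nat.
Local Notation A := (L6 m n).
Local Notation B := (L6 p q).
Variable phi : B -> A.
Hypotheses (phi_inj : injective phi) (phi_hom : hom phi).

Lemma phi_subset (X Y : L6T p q) : lset X \subset lset Y -> lset (phi X) \subset lset (phi Y).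
Proof.
move=> XY; have XYX : @pmeet B X Y = X.
  by apply: lset_inj; apply/setP => z; rewrite in_meet andb_idr //; apply: (subsetP XY).
apply/subsetP => x; rewrite -XYX (homM phi_hom (x := X) (y := Y)) //.
by rewrite in_meet => /andP [].
Qed.

Lemma in_phi_down (Y : L6T p q) x : x \in lset (phi Y) ->
  exists2 y, y \in lset Y & x \in lset (phi (down p y)).
Proof.
rewrite {1}(L6_down_cover Y) (hom_foldr_join _ phi_hom) in_foldr_join -map_comp.
by case/hasP => _ /mapP [y yY ->] xy; exists y; rewrite // mem_enum in yY.
Qed.

Lemma phi_minimal_down x : exists y, x \in lset (phi (down p y)) /\
  forall z, q6le p z y -> x \in lset (phi (down p z)) -> z = y.
Proof.
have [y _ xy] : exists2 y, y \in lset (ptop B) & x \in lset (phi (down p y)).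
  by apply: in_phi_down; rewrite (hom1 phi_hom) in_top.
case: (classic (exists z, [/\ q6le p z y, z != y & x \in lset (phi (down p z))])).
  move=> [[[] k] [zy zny xz]]; first by rewrite (q6le_top zy) eqxx in zny.
  by exists (false, k); split=> // w /q6le_bot.
move=> ymin; exists y; split=> // z zy xz; apply: NNPP => zny.
by apply: ymin; exists z; split=> //; apply/eqP.
Qed.

Section DualMap.
Variable f : Q6 n -> Q6 q.
Hypothesis f_spec : forall x, x \in lset (phi (down p (f x))) /\
  forall z, q6le p z (f x) -> x \in lset (phi (down p z)) -> z = f x.

Lemma in_phi (Y : L6T p q) x : (x \in lset (phi Y)) = (f x \in lset Y).
Proof.
have [xf fmin] := f_spec x; apply/idP/idP => [xY|fY].
  have : x \in lset (phi (@pmeet B Y (down p (f x)))) by rewrite (homM phi_hom) // in_meet xY.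
  case/in_phi_down => y; rewrite in_meet in_down => /andP [yY yf] xy.
  by rewrite -(fmin y yf xy).
apply: (subsetP (phi_subset _) _ xf); apply/subsetP => z.
by rewrite in_down; apply: L6_decreasing.
Qed.

Lemma dual_map_mono x y : q6le m x y -> q6le p (f x) (f y).
Proof.
move=> xy; rewrite -in_down -in_phi; apply: L6_decreasing xy.
by rewrite in_phi in_down q6le_refl.
Qed.

Lemma dual_map_zeta x : f (zeta x) = zeta (f x).
Proof.
have zetaY (Y : L6T p q) : (f (zeta x) \in lset Y) = (zeta (f x) \in lset Y).
  have := congr1 (fun Z => x \in lset Z) (homN phi_hom (x := Y) I).
  by rewrite /= !(in_phi, in_neg) => /negb_inj.
apply: (q6le_anti (m := p)); first by rewrite -in_down zetaY in_down q6le_refl.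
by rewrite -in_down -zetaY in_down q6le_refl.
Qed.

Lemma dual_map_back x y : q6le p y (f x) -> exists2 z, q6le m z x & f z = y.
Proof.
move=> yfx.
have : x \notin lset (phi (@pstar B (down p y))).
  by rewrite in_phi in_star negbK; apply/existsP; exists y; rewrite in_down q6le_refl.
rewrite (homS phi_hom) // in_star negbK => /existsP [z /andP [zy zx]].
rewrite in_phi in_down in zy.
have [fzy|fzy] := eqVneq (f z) y; first by exists z.
have [fxy|yfx'] := eqVneq y (f x); first by exists x; rewrite ?q6le_refl.
by case: (q6le_no_chain zy yfx fzy yfx').
Qed.

Lemma dual_map_surj y : exists x, f x = y.
Proof.
apply: NNPP => noy.
have : phi (down p y) = phi (sdown p y).
  apply: lset_inj; apply/setP => x; rewrite !in_phi in_down in_sdown.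
  by rewrite andb_idr // => _; apply/eqP => fxy; apply: noy; exists x.
move/phi_inj/(congr1 (fun Y => y \in lset Y)).
by rewrite in_down in_sdown q6le_refl eqxx.
Qed.

End DualMap.

Lemma embedding_pm_morphism :
  exists f : Q6 n -> Q6 q, pm_morphism m p f /\ forall y, exists x, f x = y.
Proof.
have [f f_spec] := fin_all_exists phi_minimal_down.
exists f; split; last exact: dual_map_surj.
split; [exact: dual_map_mono|exact: dual_map_back|exact: dual_map_zeta].
Qed.

End EmbeddingDual.

Section MorphismDual.
Variables m n p q : nat.
Variable f : Q6 n -> Q6 q.
Hypotheses (f_pm : pm_morphism m p f) (f_surj : forall y, exists x, f x = y).

Lemma dec_preimage (Y : L6T p q) : decreasing m [set x | f x \in lset Y].
Proof.
case: f_pm => f_mono _ _.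
by apply/decreasingP => x y; rewrite !inE => fy /f_mono; apply: L6_decreasing.
Qed.

Definition preimage (Y : L6T p q) : L6T m n := L6E (dec_preimage Y).

Lemma in_preimage Y x : (x \in lset (preimage Y)) = (f x \in lset Y).
Proof. by rewrite inE. Qed.

Lemma preimage_hom : hom (preimage : L6 p q -> L6 m n).
Proof.
case: f_pm => f_mono f_back f_zeta.
split=> [X Y _ _|X Y _ _|Y _|Y _||]; apply: lset_inj; apply/setP => x;
  rewrite ?in_join ?in_meet ?in_star ?in_neg ?in_bot ?in_top !in_preimage
          ?in_join ?in_meet ?in_star ?in_neg ?in_bot ?in_top //.
- congr (~~ _); apply/existsP/existsP => [[y /andP [yY yfx]]|[z /andP [zY zx]]].
    by have [z zx fz] := f_back _ _ yfx; exists z; rewrite in_preimage fz yY.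
  by exists (f z); rewrite -in_preimage zY f_mono.
- by rewrite f_zeta.
Qed.

Lemma preimage_inj : injective preimage.
Proof.
move=> X Y XY; apply: lset_inj; apply/setP => y.
by have [x <-] := f_surj y; rewrite -!in_preimage XY.
Qed.

End MorphismDual.

(** * Combinatorics of the dual maps *)

Section Levels.
Variables m n p q : nat.

Definition lift (g : 'I_n -> 'I_q) (x : Q6 n) : Q6 q := (x.1, g x.2).

Lemma pm_morphism_bottom (f : Q6 n -> Q6 q) : 3 <= n -> pm_morphism m p f ->
  forall i, (f (false, i)).1 = false.
Proof.
move=> n3 [f_mono f_back f_zeta] i; apply/negP => fi.
have [k fik] : exists k, f (false, i) = (true, k) by case: (f _) fi => -[] k // _; exists k.
have f_other j : j != i -> f (false, j) = (false, k) /\ f (true, j) = (true, k).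
  move=> ji; have : q6le m (false, i) (true, j) by rewrite q6leE /= eq_sym ji.
  move/f_mono; rewrite fik => /q6le_top ftj.
  by split=> //; move: (f_zeta (true, j)); rewrite ftj.
have [j [l [ji li jl]]] := two_others n3 i.
have pk : p <= k.
  have : q6le m (false, j) (true, l) by rewrite q6leE /= jl.
  by move/f_mono; rewrite (f_other j ji).1 (f_other l li).2 q6leE /= eqxx.
have /f_back [z zi] : q6le p (false, k) (f (false, i)) by rewrite fik q6leE /= pk orbT.
by rewrite (q6le_bot zi) fik.
Qed.

Lemma pm_morphism_lift (f : Q6 n -> Q6 q) : 3 <= n -> pm_morphism m p f ->
  f = lift (fun i => (f (false, i)).2).
Proof.
move=> n3 fpm; have fb := pm_morphism_bottom n3 fpm.
apply: functional_extensionality => -[[] i]; rewrite /lift /=.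
  by case: fpm => _ _ /(_ (false, i)) /= ->; rewrite /zeta fb.
by case: (f _) (fb i) => b k /= ->.
Qed.

Definition fibre_condition (g : 'I_n -> 'I_q) : Prop :=
  (forall k : 'I_q, k < p -> exists i : 'I_n, i < m /\ forall j, g j = k <-> j = i) /\
  (forall k : 'I_q, p <= k -> exists i, g i = k /\ (m <= i \/ exists2 j, j != i & g j = k)).

Lemma fibre_condition_pm_morphism g : fibre_condition g ->
  pm_morphism m p (lift g) /\ forall y, exists x, lift g x = y.
Proof.
move=> [fib_I fib_J].
have g_surj k : exists i, g i = k.
  by case: (ltnP k p) => [/fib_I [i [_ gi]]|/fib_J [i [gi _]]]; exists i; rewrite ?gi.
split; last by case=> b k; have [i gi] := g_surj k; exists (b, i); rewrite /lift gi.
split; last by case.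
  case=> [b i] [c j]; rewrite /lift /= !q6leE => /orP [/andP [/eqP -> /eqP ->]|].
    by rewrite !eqxx.
  case/and3P => /negbTE -> -> ij /=; case: (ltnP (g i) p) => [gip|]; last by rewrite orbT.
  rewrite orbF; apply/eqP => gij; have [i0 [i0m fibre]] := fib_I _ gip.
  move: ij; rewrite ((fibre i).1 erefl) ((fibre j).1 (esym gij)) eqxx /=.
  by rewrite leqNgt i0m.
case=> [c l] [b a]; rewrite /lift /= q6leE => /orP [/andP [/eqP -> /eqP ->]|].
  by exists (c, l); rewrite ?q6le_refl.
case/and3P => /negbTE -> -> H.
suff [i gi il] : exists2 i, g i = a & (i != l) || (m <= i).
  by exists (false, i); rewrite ?q6leE /= ?il // gi.
case/orP: H => [agl|pa].
  have [i gi] := g_surj a; exists i => //.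
  by apply/orP; left; apply: contraNneq agl => il; rewrite -gi il.
have [i [gi [mi|[j ji gj]]]] := fib_J _ pa; first by exists i; rewrite // mi orbT.
have [il|il] := eqVneq i l; last by exists i; rewrite // il.
by exists j; rewrite // -il ji.
Qed.

Lemma pm_morphism_fibre_condition g : pm_morphism m p (lift g) ->
  (forall y, exists x, lift g x = y) -> fibre_condition g.
Proof.
move=> [g_mono g_back _] lg_surj.
have g_surj k : exists i, g i = k.
  by have [[b i] [_ gi]] := lg_surj (false, k); exists i.
split=> k.
  move=> kp; have [l gl] := g_surj k.
  have fibre j : g j = k -> (j == l) && (j < m).
    move=> gj; move: (g_mono (false, j) (true, l)); rewrite /lift !q6leE /= gj gl eqxx /=.
    by rewrite [p <= k]leqNgt kp ltnNge; case: (j =P l); case: (m <= j) => // _ /(_ isT).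
  have /andP [_ lm] := fibre l gl.
  by exists l; split=> // j; split=> [/fibre /andP [/eqP]|->].
move=> pk; have [l gl] := g_surj k.
have := g_back (true, l) (false, k); rewrite /lift /= gl q6leE /= pk orbT.
case=> // -[[] i]; rewrite q6leE //= => il [gi].
exists i; split=> //; case/orP: il => [il|mi]; last by left.
by right; exists l; rewrite // eq_sym.
Qed.

End Levels.

Lemma sum_weight (m n : nat) : \sum_(i < n) (1 + (m <= i)) = n + (n - m).
Proof. by elim: n => [|n IH]; rewrite ?big_ord0 // big_ord_recr /= IH; case: leqP; lia. Qed.

Lemma sum_ltn (m n : nat) : \sum_(i < n) (i < m) = minn m n.
Proof. by elim: n => [|n IH]; rewrite ?big_ord0 ?minn0 // big_ord_recr /= IH; case: ltnP; lia. Qed.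

Section FibreCounting.
Variables m n p q : nat.
Variable g : 'I_n -> 'I_q.
Hypothesis fib : fibre_condition m p g.

Let fibre_sum (F : 'I_n -> nat) : \sum_(i < n) F i = \sum_(k < q) \sum_(i < n | g i == k) F i.
Proof. exact: partition_big. Qed.

Lemma fibre_weight_lt (k : 'I_q) : k < p -> \sum_(i < n | g i == k) (1 + (m <= i)) = 1.
Proof.
move=> kp; have [i [im fibre]] := fib.1 k kp.
rewrite (big_pred1 i) => [|j /=]; last by apply/eqP/idP => [/fibre ->|/eqP /fibre].
by rewrite leqNgt im.
Qed.

Lemma fibre_weight_ge (k : 'I_q) : p <= k -> 2 <= \sum_(i < n | g i == k) (1 + (m <= i)).
Proof.
move=> pk; have [i [gi [mi|[j ji gj]]]] := fib.2 k pk.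
  by rewrite (bigD1 i) /= ?gi // mi; lia.
rewrite (bigD1 i) /= ?gi // (bigD1 j) /= ?gj ?eqxx ?ji //; lia.
Qed.

Lemma fibre_condition_weight_le : q + (q - p) <= n + (n - m).
Proof.
rewrite -sum_weight -(sum_weight m n) fibre_sum; apply: leq_sum => k _.
by case: (ltnP k p) => [kp|pk]; [rewrite fibre_weight_lt|exact: fibre_weight_ge].
Qed.

Lemma fibre_condition_weight_eq : p = q -> n + (n - m) = q.
Proof.
move=> pq; rewrite -(sum_weight m n) fibre_sum (eq_bigr (fun=> 1)).
  by rewrite sum_nat_const card_ord muln1.
by move=> k _; apply: fibre_weight_lt; rewrite pq.
Qed.

Lemma fibre_condition_leq_pm : m <= n -> p <= q -> p <= m.
Proof.
move=> mn pq; suff : minn p q <= minn m n by lia.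
rewrite -sum_ltn -(sum_ltn m n) fibre_sum; apply: leq_sum => k _.
case: (ltnP k p) => // kp; have [i [im fibre]] := fib.1 k kp.
by rewrite (bigD1 i) /= ?im //; apply/eqP/fibre.
Qed.

End FibreCounting.

Lemma fibre_condition_of_nat (m n p q : nat) (G : nat -> nat) : m <= n ->
  (forall i, i < n -> G i < q) ->
  (forall k, k < p -> exists i, [/\ i < m, G i = k & forall j, j < n -> G j = k -> j = i]) ->
  (forall k, p <= k -> k < q -> exists i, [/\ i < n, G i = k &
      m <= i \/ exists j, [/\ j < n, j != i & G j = k]]) ->
  exists g : 'I_n -> 'I_q, fibre_condition m p g.
Proof.
move=> mn G_lt G_I G_J; exists (fun i : 'I_n => Ordinal (G_lt i (ltn_ord i))); split=> k.
  move=> kp; have [i [im Gi Guniq]] := G_I k kp; have i_n : i < n by lia.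
  exists (Ordinal i_n); split=> // j; split=> [/(congr1 val) /= Gj|->].
    by apply: val_inj; exact: Guniq (ltn_ord j) Gj.
  by apply: val_inj.
move=> pk; have [i [i_n Gi Hi]] := G_J k pk (ltn_ord k).
exists (Ordinal i_n); split; first exact: val_inj.
case: Hi => [mi|[j [j_n ji Gj]]]; [by left|right].
by exists (Ordinal j_n); [|apply: val_inj].
Qed.

(* The points of I' are fixed, those of I \ I' are paired up (a leftover one joins the
   first pair), those of S \ I need no partner and are mapped one-to-one, and values beyond
   q - 1 are truncated. *)
Definition witness (m p q i : nat) : nat :=
  minn q.-1 (if i < p then i
             else if i < p + 2 * ((m - p) %/ 2) then p + (i - p) %/ 2
             else if i < m then p else p + (m - p) %/ 2 + (i - m)).

Lemma witness_fibre_condition (m n p q : nat) : p <= m -> m <= n -> p < q ->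
  q <= p + (m - p) %/ 2 + (n - m) -> exists g : 'I_n -> 'I_q, fibre_condition m p g.
Proof.
move=> pm mn pq qn; set r := (m - p) %/ 2; have r2 : 2 * r <= m - p by rewrite /r; lia.
apply: (@fibre_condition_of_nat m n p q (witness m p q)) => // [i _|k kp|k pk kq].
- by rewrite /witness; lia.
- exists k; split; [lia|rewrite /witness kp; lia|move=> j _].
  by rewrite /witness -/r; case: ifP => [jp|_]; [lia|case: ifP => _; [|case: ifP => _]; lia].
case: (ltnP k (p + r)) => kr.
  exists (p + 2 * (k - p)); split; [lia|rewrite /witness -/r|right].
    by rewrite ifF ?ifT; lia.
  exists (p + 2 * (k - p) + 1); split; [lia|lia|rewrite /witness -/r].
  by rewrite ifF ?ifT; lia.
exists (m + (k - p - r)); split; [rewrite /r in kr *; lia|rewrite /witness -/r|by left; lia].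
by rewrite !ifF; lia.
Qed.

Lemma In_mem (T : eqType) (x : T) (s : seq T) : x \in s -> List.In x s.
Proof. by elim: s => //= y s IH; rewrite inE => /orP [/eqP ->|/IH]; auto. Qed.

Lemma L6_inV_embedding (m n p q : nat) : 3 <= n -> 3 <= q ->
  inV (L6 p q) (L6 m n) -> exists phi : L6 p q -> L6 m n, injective phi /\ hom phi.
Proof.
move=> n3 q3; apply: (discriminator_embedding (L6_discriminator m n3) (L6_discriminator p q3)).
- by apply: L6_nontrivial; lia.
- by apply: L6_nontrivial; lia.
- exact: L6_meet_top.
- exact: L6_meet_botl.
- exact: L6_meet_botr.
- exact: L6_meet_top.
- by exists (enum {: L6T p q}) => b; apply: In_mem; rewrite mem_enum.
Qed.

Lemma L6_inV_fibre_condition (m n p q : nat) : 3 <= n -> 3 <= q ->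
  inV (L6 p q) (L6 m n) <-> exists g : 'I_n -> 'I_q, fibre_condition m p g.
Proof.
move=> n3 q3; split.
  case/(L6_inV_embedding n3 q3) => phi [phi_inj phi_hom].
  have [f [f_pm f_surj]] := embedding_pm_morphism phi_inj phi_hom.
  have fE := pm_morphism_lift n3 f_pm; rewrite fE in f_pm f_surj.
  by eexists; apply: pm_morphism_fibre_condition f_pm f_surj.
case=> g /fibre_condition_pm_morphism [g_pm g_surj].
exact: (@embedding_inV (L6 m n) (L6 p q) _
  (preimage_inj (f_pm := g_pm) g_surj) (preimage_hom g_pm)).
Qed.

Theorem theorem5p5 (m n p q : nat) :
  3 <= n -> 3 <= q -> m <= n -> p <= q ->
  (inV (L6 p q) (L6 m n) <->
   p <= m /\
   ((p = q /\ q = m /\ m = n) \/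
    (p < q /\ q <= p + (m - p) %/ 2 + (n - m)))).
Proof.
move=> n3 q3 mn pq; rewrite L6_inV_fibre_condition //; split.
  move=> [g fib]; have pm := fibre_condition_leq_pm fib mn pq.
  have := fibre_condition_weight_le fib; have := fibre_condition_weight_eq fib.
  case: (ltnP p q) => [|qp]; first by lia.
  have pq' : p = q by lia.
  by move/(_ pq'); lia.
move=> [pm [[<- [<- <-]]|[pq' qn]]]; last exact: witness_fibre_condition.
apply: (@fibre_condition_of_nat p p p p id) => // [k kp|k pk kq]; last by lia.
by exists k; split=> // j _ ->.
Qed.
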